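(* Let $0<\Delta\le1$ and $T=\frac{\lambda_1}{\Delta}\ln\frac{1}{\Delta}$. There exist constants $C_0,C_1>0$, independent of $P$ and $\Delta$, such that for all $P>0$ the quantizer $q_r$ with these parameters satisfies $$\mathbb{E}[r_{\rm loss}]\le\log_2(1+C_0P\Delta)\le C_1P\Delta.$$
   Context: $H_1,H_2$ are independent exponential random variables with means $\lambda_1\ge\lambda_2>0$ (density $e^{-x/\lambda_i}/\lambda_i$, $x>0$); $P>0$ is the total power. For $a\ge b\ge0$ with $a>0$ let $A(a,b)=\frac{2b}{\sqrt{(a+b)^2+4ab^2P}+a+b}$. Full-CSI maximum minimum rate: $r_{\max}=\log_2(1+PH_1A(H_1,H_2))$ if $H_1\ge H_2$ and $r_{\max}=\log_2(1+PH_2A(H_2,H_1))$ if $H_1<H_2$. Quantizer with parameters $\Delta>0$, $T\ge0$: $q_r(x)=\lfloor x/\Delta\rfloor\Delta$ for $x\le T\Delta$, $q_r(x)=T\Delta$ for $x>T\Delta$. Let $a_i=q_r(H_i)$; if $a_1\ge a_2$ let $(s,w)=(1,2)$, otherwise $(s,w)=(2,1)$. $\alpha_q=A(a_s,a_w)$ if $a_1,a_2>0$, else $\alpha_q=0$. Adapted rates: $r_{s,q}=\log_2(1+P\alpha_qa_s)$, $r_{w,q}=\log_2\big(1+\frac{Pa_w(1-\alpha_q)}{Pa_w\alpha_q+1}\big)$. Rate loss: $r_{\rm loss}=r_{\max}-\min\{r_{1,q},r_{2,q}\}$. *)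

From mathcomp Require Import all_boot all_order all_algebra.
From mathcomp Require Import all_classical all_reals all_analysis.
Set Implicit Arguments. Unset Strict Implicit. Unset Printing Implicit Defensive.
Import Order.TTheory GRing.Theory Num.Theory.
Local Open Scope classical_set_scope.
Local Open Scope ring_scope.

Section Defs.
Variable R : realType.

Definition log2 (x : R) : R := ln x / ln 2.

Definition Afun (P a b : R) : R :=
  2 * b / (Num.sqrt ((a + b) ^+ 2 + 4 * a * b ^+ 2 * P) + a + b).

(* full-CSI maximum minimum rate *)
Definition rmax (P h1 h2 : R) : R :=
  if h2 <= h1 then log2 (1 + P * h1 * Afun P h1 h2)
  else log2 (1 + P * h2 * Afun P h2 h1).

Definition qr (Delta T x : R) : R :=
  if x <= T * Delta then (Num.floor (x / Delta))%:~R * Delta else T * Delta.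

Definition rq_min (P Delta T h1 h2 : R) : R :=
  let a1 := qr Delta T h1 in
  let a2 := qr Delta T h2 in
  let as_ := if a2 <= a1 then a1 else a2 in
  let aw := if a2 <= a1 then a2 else a1 in
  let alpha := if (0 < a1) && (0 < a2) then Afun P as_ aw else 0 in
  let rs := log2 (1 + P * alpha * as_) in
  let rw := log2 (1 + P * aw * (1 - alpha) / (P * aw * alpha + 1)) in
  Num.min rs rw.

Definition rloss (P Delta T h1 h2 : R) : R :=
  rmax P h1 h2 - rq_min P Delta T h1 h2.

Definition expdens (l x : R) : R := expR (- x / l) / l.

(* expectation of f(H1,H2) for independent exponential H1, H2 with means
   l1, l2: integral against the product density on (0,+oo)^2 *)
Definition Eexp2 (l1 l2 : R) (f : R -> R -> R) : \bar R :=
  (\int[lebesgue_measure]_(x in `]0%R, +oo[)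
     \int[lebesgue_measure]_(y in `]0%R, +oo[)
        (f x y * expdens l1 x * expdens l2 y)%:E)%E.

End Defs.

(* Both the full-CSI rate and the quantized min rate are [log2 (1 + y)] for
   the common SNR [y] of the max-min power split, the positive root of
   [y^2 min(a, b) + y (a + b) = P a b] for the (true or quantized) gains.
   Lowering the gains by [u] and [v] lowers this root by at most [P (u + v)],
   so the loss is at most [log2 (1 + P e)], where the quantization error [e]
   is at most [2 Delta] plus the overflows of [H1] and [H2] beyond [T Delta].
   As [e |-> log2 (1 + P e)] is concave it suffices that [E e <= C0 Delta],
   and each exponential overflow has mean at most
   [4 l exp (- T Delta / l) <= 4 l Delta] because [T Delta = l1 ln (1 / Delta)]. *)

From mathcomp Require Import all_boot all_order all_algebra.
From mathcomp Require Import all_classical all_reals all_analysis.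
From mathcomp Require Import measurable_realfun ring lra.
Set Implicit Arguments. Unset Strict Implicit. Unset Printing Implicit Defensive.
Import Order.TTheory GRing.Theory Num.Theory.
Import numFieldTopology.Exports.
Local Open Scope classical_set_scope.
Local Open Scope ring_scope.

Section integral_majorant.
Context d (T : measurableType d) (R : realType).
Variable mu : {measure set T -> \bar R}.
Local Open Scope ereal_scope.

(* No measurability is needed: both sides are suprema over simple functions
   below [f^+] and [g]. *)
Lemma le_integral_nneg_majorant (D : set T) (f g : T -> \bar R) :
  (forall x, D x -> 0 <= g x) -> (forall x, D x -> f x <= g x) ->
  \int[mu]_(x in D) f x <= \int[mu]_(x in D) g x.
Proof.
move=> g0 fg; rewrite integralE.
apply: (@le_trans _ _ (\int[mu]_(x in D) f^\+ x)).
  rewrite -[leRHS]adde0 leeD // oppe_le0.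
  by apply: integral_ge0 => x _; exact: funeneg_ge0.
have gD0 x : 0 <= (g \_ D) x by rewrite patchE; case: ifP => // /set_mem /g0.
have fD0 x : 0 <= (f^\+ \_ D) x.
  by rewrite patchE; case: ifP => // _; exact: funepos_ge0.
rewrite integral_mkcond [leRHS]integral_mkcond !ge0_integralTE //.
apply: ereal_sup_le => _ [h /= hf <-]; exists h => //= x.
apply: (le_trans (hf x)); rewrite !patchE; case: ifP => // /set_mem Dx.
by rewrite funeposE ge_max g0 // fg.
Qed.

End integral_majorant.

Section log2.
Variable R : realType.

Lemma ln2_gt0 : 0 < ln (2 : R).
Proof. by rewrite ln_gt0 // ltr1n. Qed.

Lemma ler_log2 (x y : R) : 0 < x -> x <= y -> log2 x <= log2 y.
Proof.
move=> x0 xy; rewrite /log2 ler_pM2r ?invr_gt0 ?ln2_gt0 //.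
by rewrite ler_ln ?posrE // (lt_le_trans x0).
Qed.

Lemma log2_1D_sub_le (x y e : R) : 0 <= x -> 0 <= y -> 0 <= e -> x <= y + e ->
  log2 (1 + x) - log2 (1 + y) <= log2 (1 + e).
Proof.
move=> x0 y0 e0 xye.
rewrite /log2 -mulrBl ler_pM2r ?invr_gt0 ?ln2_gt0 //.
rewrite lerBlDr -lnM ?posrE ?ltr_wpDr //.
by rewrite ler_ln ?posrE ?mulr_gt0 ?ltr_wpDr //; nra.
Qed.

Lemma log2_1D_tangent (s t : R) : -1 < s -> -1 < t ->
  log2 (1 + t) <= log2 (1 + s) + (t - s) / ((1 + s) * ln 2).
Proof.
move=> s1 t1; have s0 : 0 < 1 + s by lra.
set w := (t - s) / (1 + s).
have w1 : -1 < w by rewrite /w ltr_pdivlMr //; lra.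
have wE : 1 + w = (1 + t) / (1 + s) by rewrite /w; field; rewrite gt_eqF.
have := le_ln1Dx w1; rewrite wE lnM ?posrE ?invr_gt0 //; last by lra.
rewrite lnV ?posrE // => lnw.
rewrite /log2 invfM mulrA -/w -mulrDl ler_pM2r ?invr_gt0 ?ln2_gt0 //; lra.
Qed.

Lemma log2_1D_le (s : R) : -1 < s -> log2 (1 + s) <= s / ln 2.
Proof.
move=> s1; have := @log2_1D_tangent 0 s ltac:(lra) s1.
by rewrite addr0 /log2 ln1 mul0r add0r subr0 mul1r.
Qed.

Lemma log2_1D_ge (s : R) : -1 < s -> s / ((1 + s) * ln 2) <= log2 (1 + s).
Proof.
move=> s1; have := @log2_1D_tangent s 0 s1 ltac:(lra).
rewrite addr0 /log2 ln1 mul0r sub0r mulNr; lra.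
Qed.

End log2.

Section exponential_tails.
Variable R : realType.
Local Notation mu := (@lebesgue_measure R).

Lemma expdensE (l x : R) : 0 <= x -> expdens l x = exponential_pdf l^-1 x.
Proof.
by move=> x0; rewrite /expdens exponential_pdfE // mulrC !mulNr [x * _]mulrC.
Qed.

Lemma expdens_ge0 (l x : R) : 0 < l -> 0 <= expdens l x.
Proof. by move=> l0; rewrite divr_ge0 ?expR_ge0 ?ltW. Qed.

Lemma measurable_expdens (D : set R) (l : R) : measurable_fun D (expdens l).
Proof.
apply: measurable_funM => //; apply: measurableT_comp => //.
exact: measurable_funM.
Qed.

Lemma measurable_tail_expdens (D : set R) (l c : R) :
  measurable_fun D (fun x => Num.max (x - c) 0 * expdens l x).
Proof.
apply: measurable_funM; last exact: measurable_expdens.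
by apply: measurable_maxr => //; exact: measurable_funD.
Qed.

Lemma integral_exponential_pdf_itvcy (r c : R) : 0 < r -> 0 <= c ->
  (\int[mu]_(x in `[c, +oo[) (exponential_pdf r x)%:E = (expR (- r * c))%:E)%E.
Proof.
move=> r0 c0.
have cexpNM : continuous (fun z : R^o => expR (- r * z)).
  move=> z; apply: continuous_comp; last exact: continuous_expR.
  by apply: continuousM => //; apply: (@continuousN _ R^o); exact: cst_continuous.
rewrite (@ge0_continuous_FTC2y _ _ (fun x => - expR (- r * x)) _ 0) //.
- by rewrite EFinN sub0e oppeK.
- by move=> x _; apply: exponential_pdf_ge0; exact: ltW.
- apply: (@continuous_subspaceW R^o _ _ [set` `[0, +oo[%R]).
    by move=> x /=; rewrite !in_itv /= !andbT; exact: le_trans.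
  exact: within_continuous_exponential_pdf.
- rewrite -oppr0; apply: cvgN.
  rewrite (_ : (fun x => expR (- r * x)) = (fun z => expR (- z)) \o ( *%R r)).
    apply: (@cvg_comp _ _ _ _ _ _ (pinfty_nbhs R)); last exact: cvgr_expR.
    exact: gt0_cvgMry.
  by apply: eq_fun => x; rewrite mulNr.
- by apply: cvgN; apply/cvg_at_right_filter; exact: cexpNM.
- move=> z; rewrite in_itv /= andbT => cz.
  by apply: derive1_exponential_pdf; rewrite in_itv /= andbT (le_lt_trans c0).
Qed.

Lemma integral_expdens_le1 (l : R) : 0 < l ->
  (\int[mu]_(x in `]0%R, +oo[) (expdens l x)%:E <= 1)%E.
Proof.
move=> l0; have il0 : 0 <= l^-1 by rewrite invr_ge0 ltW.
rewrite integral_mkcond -(@integral_exponential_pdf R l^-1) ?invr_gt0 //.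
apply: le_integral_nneg_majorant => x _.
  by rewrite lee_fin exponential_pdf_ge0.
rewrite patchE; case: ifP => [|_]; last by rewrite lee_fin exponential_pdf_ge0.
by rewrite inE /= in_itv /= andbT => /ltW x0; rewrite expdensE.
Qed.

(* With [t = (x - c) / (2 l)] this is [t * expR (- t) <= 1]. *)
Lemma tail_expdens_le (l c x : R) : 0 < l -> 0 <= c -> c <= x ->
  (x - c) * expdens l x <=
  4 * l * expR (- c / (2 * l)) * exponential_pdf (2 * l)^-1 x.
Proof.
move=> l0 c0 cx; have l2 : 0 < 2 * l by rewrite mulr_gt0.
rewrite exponential_pdfE ?(le_trans c0) // /expdens.
set t := (x - c) / (2 * l); set E := expR (- c / (2 * l)); set F := expR (- t).
have tE : x - c = 2 * l * t by rewrite /t mulrC divfK ?gt_eqF.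
have ex : expR (- x / l) = E * E * F * F.
  by rewrite -!expRD; congr expR; rewrite /t; field; rewrite gt_eqF.
have eh : expR (- (2 * l)^-1 * x) = E * F.
  by rewrite -expRD; congr expR; rewrite /t; field; rewrite gt_eqF.
have ht : t * F <= 1.
  rewrite /F expRN -ler_pdivlMr ?invr_gt0 ?expR_gt0 // mul1r invrK.
  by apply: le_trans (expR_ge1Dx t); rewrite lerDr.
rewrite tE ex eh.
have -> : 2 * l * t * (E * E * F * F / l) = 2 * E * (E * F) * (t * F).
  by field; rewrite gt_eqF.
have -> : 4 * l * E * ((2 * l)^-1 * (E * F)) = 2 * E * (E * F) * 1.
  by field; rewrite gt_eqF.
by rewrite ler_wpM2l // !mulr_ge0 ?expR_ge0.
Qed.

Lemma integral_tail_expdens_le (l c : R) : 0 < l -> 0 <= c ->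
  (\int[mu]_(x in `]0%R, +oo[) (Num.max (x - c) 0 * expdens l x)%:E
     <= (4 * l * expR (- c / l))%:E)%E.
Proof.
move=> l0 c0; have l2 : 0 < (2 * l)^-1 by rewrite invr_gt0 mulr_gt0.
set K := 4 * l * expR (- c / (2 * l)).
have K0 : 0 <= K by rewrite !mulr_ge0 ?expR_ge0 ?ltW.
have g0 x : 0 <= K * exponential_pdf (2 * l)^-1 x.
  by rewrite mulr_ge0 // exponential_pdf_ge0 ?ltW.
apply: (@le_trans _ _ (\int[mu]_(x in `[c, +oo[)
    (K * exponential_pdf (2 * l)^-1 x)%:E)%E).
  rewrite [leLHS]integral_mkcond [leRHS]integral_mkcond.
  apply: le_integral_nneg_majorant => x _.
    by rewrite patchE; case: ifP; rewrite // lee_fin.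
  rewrite !patchE; case: ifP => [|_]; last by case: ifP; rewrite // lee_fin.
  rewrite inE /= in_itv /= andbT => x0.
  case: ifP => [|/negbT].
    rewrite inE /= in_itv /= andbT => cx.
    have -> : Num.max (x - c) 0 = x - c by apply/max_idPl; rewrite subr_ge0.
    by rewrite lee_fin tail_expdens_le.
  rewrite notin_setE /= in_itv /= andbT => /negP; rewrite -ltNge => xc.
  have -> : Num.max (x - c) 0 = 0 by apply/max_idPr; rewrite subr_le0 ltW.
  by rewrite mul0r.
under eq_integral do rewrite EFinM.
rewrite ge0_integralZl_EFin //; first last.
- apply/measurable_EFinP; apply: measurable_funTS.
  exact: measurable_exponential_pdf.
- by move=> x _; rewrite lee_fin exponential_pdf_ge0 ?ltW.
rewrite integral_exponential_pdf_itvcy // -EFinM lee_fin /K -!mulrA -expRD.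
by have -> : - c / (2 * l) + - (2 * l)^-1 * c = - c / l by field; rewrite gt_eqF.
Qed.

Lemma integral_expdens_affine_le (l c a b : R) :
  0 < l -> 0 <= c -> 0 <= a -> 0 <= b ->
  (\int[mu]_(x in `]0%R, +oo[)
      (a * expdens l x + b * (Num.max (x - c) 0 * expdens l x))%:E
     <= (a + b * (4 * l * expR (- c / l)))%:E)%E.
Proof.
move=> l0 c0 a0 b0.
have tail0 x : 0 <= Num.max (x - c) 0 * expdens l x.
  by rewrite mulr_ge0 ?expdens_ge0 // le_max lexx orbT.
have integralZ (k : R) (f : R -> R) : 0 <= k -> (forall x, 0 <= f x) ->
    measurable_fun (`]0%R, +oo[ : set R) f ->
    (\int[mu]_(x in `]0%R, +oo[) (k * f x)%:E =
     k%:E * \int[mu]_(x in `]0%R, +oo[) (f x)%:E)%E.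
  move=> k0 f0 mf; under eq_integral do rewrite EFinM.
  rewrite ge0_integralZl_EFin // => [x _|]; first by rewrite lee_fin.
  exact/measurable_EFinP.
under eq_integral do rewrite EFinD.
rewrite ge0_integralD //; last 4 first.
- by move=> x _; rewrite lee_fin mulr_ge0 ?expdens_ge0.
- by apply/measurable_EFinP; apply: measurable_funM => //; exact: measurable_expdens.
- by move=> x _; rewrite lee_fin mulr_ge0.
- apply/measurable_EFinP; apply: measurable_funM => //.
  exact: measurable_tail_expdens.
rewrite (integralZ _ _ a0 (fun x => expdens_ge0 x l0));
  last exact: measurable_expdens.
rewrite (integralZ _ _ b0 tail0); last exact: measurable_tail_expdens.
rewrite EFinD EFinM; apply: leeD.
  rewrite -[leRHS]mule1.
  by apply: lee_wpmul2l; rewrite ?lee_fin // integral_expdens_le1.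
by apply: lee_wpmul2l; rewrite ?lee_fin // integral_tail_expdens_le.
Qed.

Lemma Eexp2_le_tails (l1 l2 c A K : R) (f : R -> R -> R) :
  0 < l1 -> 0 < l2 -> 0 <= c -> 0 <= A -> 0 <= K ->
  (forall x y, 0 < x -> 0 < y ->
     f x y <= A + K * (Num.max (x - c) 0 + Num.max (y - c) 0)) ->
  (Eexp2 l1 l2 f <=
     (A + K * (4 * l1 * expR (- c / l1) + 4 * l2 * expR (- c / l2)))%:E)%E.
Proof.
move=> l10 l20 c0 A0 K0 fle; rewrite /Eexp2.
set E1 := 4 * l1 * expR (- c / l1); set E2 := 4 * l2 * expR (- c / l2).
have E20 : 0 <= E2 by rewrite !mulr_ge0 ?expR_ge0 ?ltW.
have max0 z : 0 <= Num.max (z - c) 0 by rewrite le_max lexx orbT.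
have AE0 : 0 <= A + K * E2 by rewrite addr_ge0 // mulr_ge0.
have -> : A + K * (E1 + E2) = A + K * E2 + K * E1 by ring.
apply: le_trans (integral_expdens_affine_le l10 c0 AE0 K0).
apply: le_integral_nneg_majorant => x; rewrite /= in_itv /= andbT => x0;
  have d1x := expdens_ge0 x l10; have mx := max0 x.
  by rewrite lee_fin; apply: addr_ge0; apply: mulr_ge0 => //; exact: mulr_ge0.
set a := (A + K * Num.max (x - c) 0) * expdens l1 x.
set b := K * expdens l1 x.
have a0 : 0 <= a by rewrite mulr_ge0 // addr_ge0 // mulr_ge0.
have b0 : 0 <= b by rewrite mulr_ge0.
have -> : (A + K * E2) * expdens l1 x + K * (Num.max (x - c) 0 * expdens l1 x)
    = a + b * E2 by rewrite /a /b; ring.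
apply: le_trans (integral_expdens_affine_le l20 c0 a0 b0).
apply: le_integral_nneg_majorant => y; rewrite /= in_itv /= andbT => y0;
  have d2y := expdens_ge0 y l20; have my := max0 y.
  by rewrite lee_fin; apply: addr_ge0; apply: mulr_ge0 => //; exact: mulr_ge0.
rewrite lee_fin.
have -> : a * expdens l2 y + b * (Num.max (y - c) 0 * expdens l2 y)
    = (A + K * (Num.max (x - c) 0 + Num.max (y - c) 0)) *
      (expdens l1 x * expdens l2 y) by rewrite /a /b; ring.
by rewrite -mulrA ler_wpM2r ?fle // mulr_ge0.
Qed.

Lemma Eexp2_le_log2_tails (l1 l2 c d m P : R) (f : R -> R -> R) :
  0 < l1 -> 0 < l2 -> 0 <= c -> 0 <= d -> 0 <= P ->
  d + 4 * l1 * expR (- c / l1) + 4 * l2 * expR (- c / l2) <= m ->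
  (forall x y, 0 < x -> 0 < y ->
     f x y <= log2 (1 + P * (d + Num.max (x - c) 0 + Num.max (y - c) 0))) ->
  (Eexp2 l1 l2 f <= (log2 (1 + P * m))%:E)%E.
Proof.
move=> l10 l20 c0 d0 P0 dm fle.
have E0 l : 0 < l -> 0 <= 4 * l * expR (- c / l).
  by move=> l0; rewrite mulr_ge0 ?expR_ge0 // mulr_ge0 // ltW.
have [e1 e2] := (E0 _ l10, E0 _ l20).
set s := P * m; have s0 : 0 <= s by rewrite mulr_ge0 //; lra.
(* Jensen: bound the concave [e |-> log2 (1 + P e)] by its tangent at [m],
   of slope [k P]. *)
set k := ((1 + s) * ln 2)^-1.
have k0 : 0 <= k by rewrite invr_ge0 mulr_ge0 //; [lra | exact: ltW (ln2_gt0 _)].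
have kP0 : 0 <= k * P := mulr_ge0 k0 P0.
have A0 : 0 <= log2 (1 + s) - k * s + k * P * d.
  have ks : s * k <= log2 (1 + s) by apply: log2_1D_ge; lra.
  have := mulr_ge0 kP0 d0; lra.
apply: le_trans (Eexp2_le_tails l10 l20 c0 A0 kP0 _) _.
  move=> x y x0 y0; apply: le_trans (fle x y x0 y0) _.
  have max0 z : 0 <= Num.max (z - c) 0 by rewrite le_max lexx orbT.
  have := max0 x; have := max0 y; set D := _ + _ + _ => my mx.
  have PD0 : 0 <= P * D by apply: mulr_ge0 => //; rewrite /D; lra.
  apply: le_trans (log2_1D_tangent (s := s) (t := P * D) _ _) _; try lra.
  by rewrite -/k le_eqVlt; apply/orP; left; apply/eqP; rewrite /D; ring.
rewrite lee_fin -subr_ge0.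
have -> : log2 (1 + s) - (log2 (1 + s) - k * s + k * P * d +
    k * P * (4 * l1 * expR (- c / l1) + 4 * l2 * expR (- c / l2))) =
  k * P * (m - (d + 4 * l1 * expR (- c / l1) + 4 * l2 * expR (- c / l2))).
  by rewrite /s; ring.
by rewrite mulr_ge0 // subr_ge0.
Qed.

End exponential_tails.

Section maxmin_snr.
Variable R : realType.
Implicit Types P a b x y : R.

Lemma Afun_ge0 P a b : 0 <= P -> 0 <= a -> 0 <= b -> 0 <= Afun P a b.
Proof.
by move=> P0 a0 b0; rewrite divr_ge0 ?mulr_ge0 // !addr_ge0 ?sqrtr_ge0.
Qed.

(* [y] is the SNR shared by both users under the max-min power split for the
   gains [a] and [b]: the positive root of this quadratic. *)
Definition is_maxmin_snr P a b y :=
  y ^+ 2 * Num.min a b + y * (a + b) = P * a * b.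

Lemma is_maxmin_snrC P a b y : is_maxmin_snr P a b y -> is_maxmin_snr P b a y.
Proof. by rewrite /is_maxmin_snr [b + a]addrC [P * b * a]mulrAC minC. Qed.

(* [P a (Afun P a b)] is the root
   [(sqrt ((a + b)^2 + 4 P a b^2) - (a + b)) / (2 b)] of
   [y^2 b + y (a + b) = P a b], with the numerator rationalised. *)
Lemma Afun_root P a b : 0 <= P -> 0 <= a -> 0 <= b ->
  (P * a * Afun P a b) ^+ 2 * b + (P * a * Afun P a b) * (a + b) = P * a * b.
Proof.
move=> P0 a0 b0.
have [ab0|abpos] : a + b = 0 \/ 0 < a + b.
  by case: (ltrP 0 (a + b)) => h; [right | left; lra].
  have -> : a = 0 by lra.
  have -> : b = 0 by lra.
  by ring.
rewrite /Afun; set D := _ + _ * P; set q := Num.sqrt D; set t := q + a + b.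
have q0 : 0 <= q := sqrtr_ge0 D.
have qD : q ^+ 2 = D by rewrite sqr_sqrtr // addr_ge0 ?sqr_ge0 // !mulr_ge0.
have t0 : t != 0 by rewrite gt_eqF // /t; lra.
set y := P * a * (2 * b / t).
have yt : y * t = 2 * P * a * b by rewrite /y; field.
apply: (mulIf (expf_neq0 2 t0)).
have -> : (y ^+ 2 * b + y * (a + b)) * t ^+ 2
    = b * (y * t) ^+ 2 + (a + b) * t * (y * t) by ring.
have -> : P * a * b * t ^+ 2 = P * a * b * (q ^+ 2 + 2 * q * (a + b) + (a + b) ^+ 2).
  by rewrite /t; ring.
by rewrite yt qD /t /D; ring.
Qed.

Lemma is_maxmin_snr_Afun P a b : 0 <= P -> 0 <= b -> b <= a ->
  is_maxmin_snr P a b (P * a * Afun P a b).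
Proof.
move=> P0 b0 ba; rewrite /is_maxmin_snr (min_idPr ba).
by apply: Afun_root => //; exact: le_trans ba.
Qed.

Lemma Afun_equal_rates P a b : 0 < P -> 0 < a -> 0 < b ->
  P * b * (1 - Afun P a b) / (P * b * Afun P a b + 1) = P * Afun P a b * a.
Proof.
move=> P0 a0 b0; set al := Afun P a b.
have al0 : 0 <= al by apply: Afun_ge0; rewrite ltW.
have root : P * a * b * al ^+ 2 + al * (a + b) = b.
  apply: (@mulfI _ (P * a)); first by rewrite mulf_neq0 ?gt_eqF.
  by rewrite -[RHS](@Afun_root P a b (ltW P0) (ltW a0) (ltW b0)) -/al; ring.
have Pbal : 0 <= P * b * al by apply: mulr_ge0 => //; apply: mulr_ge0; exact: ltW.
have den0 : P * b * al + 1 != 0 by rewrite gt_eqF //; lra.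
apply: (mulIf den0); rewrite divfK //.
have -> : P * al * a * (P * b * al + 1) =
   P * (P * a * b * al ^+ 2 + al * (a + b)) - P * b * al by ring.
by rewrite root; ring.
Qed.

Lemma maxmin_snr_le P h1 h2 a1 a2 x y : 0 <= P -> 0 < h1 -> 0 < h2 ->
  0 <= a1 -> a1 <= h1 -> 0 <= a2 -> a2 <= h2 -> 0 <= x -> 0 <= y ->
  is_maxmin_snr P h1 h2 x -> is_maxmin_snr P a1 a2 y ->
  x <= y + P * ((h1 - a1) + (h2 - a2)).
Proof.
rewrite /is_maxmin_snr => P0 h10 h20 a10 a1h a20 a2h x0 y0 hx hy.
set m := Num.min h1 h2; set n := Num.min a1 a2.
have n0 : 0 <= n by rewrite le_min a10.
have nm : n <= m by rewrite le_min !ge_min a1h a2h orbT.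
set u := h1 - a1; set v := h2 - a2; set z := y + P * (u + v).
have u0 : 0 <= u by rewrite subr_ge0.
have v0 : 0 <= v by rewrite subr_ge0.
have Puv0 : 0 <= P * (u + v) by rewrite mulr_ge0 // addr_ge0.
have z0 : 0 <= z by rewrite addr_ge0.
(* [z |-> z^2 m + z (h1 + h2)] increases on [0, +oo) and reaches [P h1 h2]
   at [x]. *)
have Qz : P * h1 * h2 <= z ^+ 2 * m + z * (h1 + h2).
  have h1E : h1 = a1 + u by rewrite /u; ring.
  have h2E : h2 = a2 + v by rewrite /v; ring.
  have zy : z - y = P * (u + v) by rewrite /z; ring.
  have yz2 : y ^+ 2 * n <= z ^+ 2 * m.
    by apply: ler_pM; rewrite ?sqr_ge0 // lerXn2r ?nnegrE // lerDl.
  have zuv : P * (u + v) * (u + v) <= z * (u + v).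
    by rewrite ler_wpM2r ?lerDr // addr_ge0.
  have PP : 0 <= P * (u * a1 + v * a2 + u ^+ 2 + u * v + v ^+ 2).
    by rewrite mulr_ge0 // !addr_ge0 ?sqr_ge0 // mulr_ge0.
  rewrite -subr_ge0.
  have -> : z ^+ 2 * m + z * (h1 + h2) - P * h1 * h2 =
    (z ^+ 2 * m - y ^+ 2 * n) + (y ^+ 2 * n + y * (a1 + a2) - P * a1 * a2)
    + (z - y) * (a1 + a2) + z * (u + v) - P * (a1 * v + u * a2 + u * v).
    by rewrite h1E h2E; ring.
  rewrite -/n hy subrr addr0 zy; nra.
rewrite leNgt; apply/negP => zx.
have : 0 < (x - z) * ((x + z) * m + h1 + h2).
  have xzm : 0 <= (x + z) * m := mulr_ge0 (addr_ge0 x0 z0) (le_trans n0 nm).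
  by rewrite mulr_gt0 // ?subr_gt0 //; lra.
have -> : (x - z) * ((x + z) * m + h1 + h2) =
  (x ^+ 2 * m + x * (h1 + h2)) - (z ^+ 2 * m + z * (h1 + h2)) by ring.
rewrite -/m hx; lra.
Qed.

Lemma rmax_maxmin_snr P h1 h2 : 0 <= P -> 0 <= h1 -> 0 <= h2 ->
  exists x, [/\ 0 <= x, rmax P h1 h2 = log2 (1 + x) & is_maxmin_snr P h1 h2 x].
Proof.
move=> P0 h10 h20; rewrite /rmax; case: ifPn => [h21|/negP h12].
  exists (P * h1 * Afun P h1 h2); split => //; last exact: is_maxmin_snr_Afun.
  by apply: mulr_ge0; [exact: mulr_ge0 | exact: Afun_ge0].
exists (P * h2 * Afun P h2 h1); split => //.
  by apply: mulr_ge0; [exact: mulr_ge0 | exact: Afun_ge0].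
by apply/is_maxmin_snrC/is_maxmin_snr_Afun => //; rewrite ltW // ltNge; exact/negP.
Qed.

Lemma min_rates_maxmin_snr P a b : 0 < P -> 0 <= b -> b <= a ->
  let alpha := if (0 < a) && (0 < b) then Afun P a b else 0 in
  exists y, [/\ 0 <= y,
    Num.min (log2 (1 + P * alpha * a))
            (log2 (1 + P * b * (1 - alpha) / (P * b * alpha + 1))) = log2 (1 + y)
    & is_maxmin_snr P a b y].
Proof.
move=> P0 b0 ba /=; have a0 := le_trans b0 ba.
case: ifPn => [/andP[a_gt0 b_gt0] | ab0].
  exists (P * Afun P a b * a); split.
  - have P0' := ltW P0.
    by apply: mulr_ge0 => //; apply: mulr_ge0 => //; exact: Afun_ge0.
  - by rewrite Afun_equal_rates // minxx.
  - by rewrite mulrAC; apply: is_maxmin_snr_Afun => //; exact: ltW.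
exists 0; split => //.
  rewrite !mulr0 mul0r subr0 mulr1 add0r divr1; apply/min_idPl.
  by rewrite ler_log2 ?addr0 // lerDl mulr_ge0 // ltW.
rewrite /is_maxmin_snr; move: ab0; rewrite negb_and -!leNgt => /orP[a_le0|b_le0].
  by rewrite (_ : a = 0); [ring | lra].
by rewrite (_ : b = 0); [ring | lra].
Qed.

End maxmin_snr.
Arguments is_maxmin_snr {R}.

Section quantizer.
Variable R : realType.
Variables (Delta T : R).

Lemma qr_ge0 x : 0 < Delta -> 0 <= T -> 0 <= x -> 0 <= qr Delta T x.
Proof.
move=> /ltW D0 T0 x0; rewrite /qr; case: ifP => _.
  by rewrite mulr_ge0 // ler0z floor_ge0 divr_ge0.
by rewrite mulr_ge0.
Qed.

Lemma qr_le x : 0 < Delta -> qr Delta T x <= x.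
Proof.
move=> D0; rewrite /qr; case: ifPn => [_|]; last by rewrite -ltNge => /ltW.
by rewrite -ler_pdivlMr //; exact: floor_le.
Qed.

Lemma qr_err x : 0 < Delta -> x - qr Delta T x <= Delta + Num.max (x - T * Delta) 0.
Proof.
move=> D0.
have m0 : 0 <= Num.max (x - T * Delta) 0 by rewrite le_max lexx orbT.
have m1 : x - T * Delta <= Num.max (x - T * Delta) 0 by rewrite le_max lexx.
rewrite /qr; case: ifP => _; last by lra.
have := floorD1_gt (x / Delta); rewrite intrD => fl.
have : x / Delta * Delta < ((Num.floor (x / Delta))%:~R + 1) * Delta.
  by rewrite ltr_pM2r.
by rewrite divfK ?gt_eqF // mulrDl mul1r; lra.
Qed.

Lemma rq_min_maxmin_snr P h1 h2 :
  0 < P -> 0 < Delta -> 0 <= T -> 0 <= h1 -> 0 <= h2 ->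
  exists y, [/\ 0 <= y, rq_min P Delta T h1 h2 = log2 (1 + y)
    & is_maxmin_snr P (qr Delta T h1) (qr Delta T h2) y].
Proof.
move=> P0 D0 T0 h10 h20; have := qr_ge0 D0 T0 h10; have := qr_ge0 D0 T0 h20.
rewrite /rq_min; move: (qr Delta T h1) (qr Delta T h2) => a1 a2 a20 a10 /=.
case: (boolP (a2 <= a1)) => [a21|]; first exact: min_rates_maxmin_snr.
rewrite -ltNge => /ltW a12; rewrite andbC.
have [y [y0 ry hy]] := min_rates_maxmin_snr P0 a10 a12.
by exists y; split => //; exact: is_maxmin_snrC.
Qed.

Lemma rloss_le P h1 h2 : 0 < P -> 0 < Delta -> 0 <= T -> 0 < h1 -> 0 < h2 ->
  rloss P Delta T h1 h2 <= log2 (1 + P * (2 * Delta + Num.max (h1 - T * Delta) 0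
                                                    + Num.max (h2 - T * Delta) 0)).
Proof.
move=> P0 D0 T0 h10 h20; rewrite /rloss.
have [x [x0 -> hx]] := rmax_maxmin_snr (ltW P0) (ltW h10) (ltW h20).
have [y [y0 -> hy]] := rq_min_maxmin_snr P0 D0 T0 (ltW h10) (ltW h20).
have max0 z : 0 <= Num.max (z - T * Delta) 0 by rewrite le_max lexx orbT.
have e1 := qr_err h1 D0; have e2 := qr_err h2 D0.
apply: log2_1D_sub_le => //.
  have m1 := max0 h1; have m2 := max0 h2.
  by apply: mulr_ge0; lra.
apply: le_trans (maxmin_snr_le (ltW P0) h10 h20 _ _ _ _ x0 y0 hx hy) _.
- exact: qr_ge0 (ltW h10).
- exact: qr_le.
- exact: qr_ge0 (ltW h20).
- exact: qr_le.
by rewrite lerD2l; apply: ler_wpM2l; [exact: ltW | lra].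
Qed.

End quantizer.

Lemma expR_tail_le (R : realType) (l1 l Delta : R) :
  0 < l -> l <= l1 -> 0 < Delta -> Delta <= 1 ->
  expR (- (l1 / Delta * ln (1 / Delta) * Delta) / l) <= Delta.
Proof.
move=> l0 ll1 D0 D1; have lnD : ln Delta <= 0 by exact: ln_le0.
rewrite mulrAC divfK ?gt_eqF // div1r lnV ?posrE // mulrN opprK.
rewrite -[leRHS](lnK (x := Delta)) ?posrE // ler_expR ler_pdivrMr //; nra.
Qed.

Theorem corollary1 (R : realType) (l1 l2 : R) (hl2 : 0 < l2) (hl12 : l2 <= l1) :
  exists C0 C1 : R, 0 < C0 /\ 0 < C1 /\
    forall Delta P : R, 0 < Delta -> Delta <= 1 -> 0 < P ->
      let T := l1 / Delta * ln (1 / Delta) in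
      (Eexp2 l1 l2 (fun h1 h2 => rloss P Delta T h1 h2)
         <= (log2 (1 + C0 * P * Delta))%:E)%E /\
      log2 (1 + C0 * P * Delta) <= C1 * P * Delta.
Proof.
have l10 : 0 < l1 := lt_le_trans hl2 hl12.
set C0 := 2 + 4 * l1 + 4 * l2; have C00 : 0 < C0 by rewrite /C0; lra.
exists C0, (C0 / ln 2); split => //; split; first by rewrite divr_gt0 ?ln2_gt0.
move=> Delta P D0 D1 P0 T; rewrite mulrAC mulrC; split; last first.
  rewrite (_ : C0 / ln 2 * P * Delta = P * (C0 * Delta) / ln 2).
    by apply: log2_1D_le; have := mulr_gt0 P0 (mulr_gt0 C00 D0); lra.
  by field; rewrite gt_eqF // ln2_gt0.
have T0 : 0 <= T.
  apply: mulr_ge0; first by apply: divr_ge0; exact: ltW.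
  by apply: ln_ge0; rewrite div1r invf_ge1.
apply: (Eexp2_le_log2_tails (d := 2 * Delta) l10 hl2 (mulr_ge0 T0 (ltW D0))).
- by rewrite mulr_ge0 // ltW.
- exact: ltW.
- have := expR_tail_le l10 (lexx l1) D0 D1; have := expR_tail_le hl2 hl12 D0 D1.
  rewrite /C0 -/T; nra.
- by move=> x y x0 y0; exact: rloss_le.
Qed.
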